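(* Let $q$ be a prime power with $q\equiv 1\pmod 3$, let $n$ be a positive integer and $a\in\mathbb{F}_q$. Then $f(x)=x^n\big(x^{\frac{q-1}{3}}+a\big)$ is a permutation polynomial of $\mathbb{F}_q$ if and only if all of the following hold: (a) $\gcd\big(n,\frac{q-1}{3}\big)=1$; (b) $a\notin\{-1,-\xi,-\xi^2\}$; (c) $\eta\big(\frac{\xi+a}{1+a}\big)\neq\delta^{2n}$; (d) $\eta\big(\frac{1+a}{\xi^2+a}\big)\neq\delta^{2n}$; (e) $\eta\big(\frac{\xi^2+a}{\xi+a}\big)\neq\delta^{2n}$.
   Context: A polynomial is a permutation polynomial of $\mathbb{F}_q$ if it induces a bijection of $\mathbb{F}_q$. Let $q\equiv 1\pmod 3$, let $\xi\in\mathbb{F}_q$ be a fixed cube root of unity with $\xi\neq 1$, and let $\delta\in\mathbb{C}$ be a fixed cube root of unity with $\delta\neq1$. Let $\eta:\mathbb{F}_q\to\mathbb{C}$ be the cubic multiplicative character defined by $\eta(0)=0$ and, for $c\in\mathbb{F}_q^*$ and integers $j$, $\eta(c)=\delta^j$ if and only if $c^{\frac{q-1}{3}}=\xi^j$. We write $\eta^2(c)$ for $\eta(c)^2$. *)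

From HB Require Import structures.
From mathcomp Require Import all_boot all_order all_algebra all_field.
Set Implicit Arguments. Unset Strict Implicit. Unset Printing Implicit Defensive.
Import GRing.Theory.
Local Open Scope ring_scope.

Definition perm_poly (F : finFieldType) (p : {poly F}) : Prop :=
  bijective (fun x : F => p.[x]).

(* The cubic multiplicative character eta : F -> algC determined by the fixed
   cube roots of unity xi (in F) and delta (in algC):
   eta 0 = 0, and for c <> 0, eta c = delta^j iff c^((q-1)/3) = xi^j. *)
Definition cubic_char (F : finFieldType) (xi : F) (delta : algC) (c : F) : algC :=
  if c == 0 then 0 else
  match [pick j : 'I_3 | c ^+ ((#|F| - 1) %/ 3) == xi ^+ j] with
  | Some j => delta ^+ j
  | None => 0
  end.

From HB Require Import structures.
From mathcomp Require Import all_boot all_order all_algebra all_field zify.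
From mathcomp Require Import cyclic.
Set Implicit Arguments. Unset Strict Implicit. Unset Printing Implicit Defensive.
Import GRing.Theory.
Local Open Scope ring_scope.

(* The proof follows the classical reduction of "x^n h(x^m)" permutation
   polynomials to a permutation question on d-th roots of unity, q - 1 = m d:
     x |-> x^n h(x^m) permutes F_q  iff  gcd(n, m) = 1, h has no zero on mu_d,
     and z |-> z^n h(z)^m is injective on mu_d.  For d = 3 we then make the
   three conditions explicit: mu_3 = {1, xi, xi^2}, so the second condition
   says a is not among -1, -xi, -xi^2, and the third says that the values
   G(1), G(xi), G(xi^2) of G(z) = z^n (z + a)^m are pairwise distinct.
   Finally, the cubic character eta detects exactly when two consecutive
   values G(xi^(i+1)) and G(xi^i) agree, which turns the distinctness into
   the three character conditions (c), (d), (e) of the theorem. *)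

(* If t^n = t^m = 1 with n, m coprime then t = 1: the order of t divides both. *)
Lemma unity_coprime (R : idomainType) (t : R) (n m : nat) :
  (0 < n)%N -> coprime n m -> t ^+ n = 1 -> t ^+ m = 1 -> t = 1.
Proof.
move=> n_gt0 co_nm tn tm; have [k prim_k k_dvd_n] := prim_order_exists n_gt0 tn.
have : (k %| gcdn n m)%N by rewrite dvdn_gcd k_dvd_n (prim_order_dvd prim_k) tm eqxx.
rewrite (eqP co_nm) dvdn1 => /eqP k1.
by have := prim_expr_order prim_k; rewrite k1 expr1.
Qed.

Section FiniteFieldUnits.

Variable F : finFieldType.

Lemma finField_unity (x : F) : x != 0 -> x ^+ (#|F| - 1) = 1.
Proof.
move=> x0; apply: (mulfI x0); rewrite mulr1 -exprS subn1.
by rewrite prednK ?expf_card // ltnW ?card_finNzRing_gt1.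
Qed.

Lemma finField_prim_root : exists w : F, (#|F| - 1).-primitive_root w.
Proof.
have /hasP[w _ prim_w] : has (#|F| - 1).-primitive_root (enum (predC1 (0 : F))).
  apply: has_prim_root; last 1 first.
  - by rewrite -cardE cardC1 subn1.
  - by rewrite subn_gt0 card_finNzRing_gt1.
  - by apply/allP => x; rewrite mem_enum => x0; apply/unity_rootP/finField_unity.
  - exact: enum_uniq.
by exists w.
Qed.

Section PowerMap.

Variables m d : nat.
Hypothesis m_d : (m * d)%N = (#|F| - 1)%N.

Lemma expm_unity (x : F) : x != 0 -> d.-unity_root (x ^+ m).
Proof. by move=> x0; apply/unity_rootP; rewrite -exprM m_d finField_unity. Qed.

Lemma expm_onto (z : F) : d.-unity_root z -> exists2 x : F, x != 0 & x ^+ m = z.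
Proof.
move=> /unity_rootP zd1; have [w prim_w] := finField_prim_root.
have q1_gt0 : (0 < #|F| - 1)%N by rewrite subn_gt0 card_finNzRing_gt1.
have d_gt0 : (0 < d)%N by move: q1_gt0; rewrite -m_d muln_gt0 => /andP[].
have zq1 : z ^+ (#|F| - 1) = 1 by rewrite -m_d mulnC exprM zd1 expr1n.
have [k def_z] := prim_rootP prim_w zq1.
have : (m * d %| k * d)%N by rewrite m_d (prim_order_dvd prim_w) exprM -def_z zd1.
rewrite dvdn_pmul2r // => /dvdnP[j def_k].
exists (w ^+ j); last by rewrite -exprM -def_k def_z.
by rewrite expf_neq0 // (prim_root_eq0 prim_w) -lt0n.
Qed.

Section Criterion.

Variables (n : nat) (h : F -> F).
Hypothesis n_gt0 : (0 < n)%N.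

Let f (x : F) := x ^+ n * h (x ^+ m).
Let g (z : F) := z ^+ n * h z ^+ m.

Let f0 : f 0 = 0.
Proof. by rewrite /f expr0n gtn_eqF // mul0r. Qed.

Let f_expm (x : F) : f x ^+ m = g (x ^+ m).
Proof. by rewrite /f /g exprMn -!exprM mulnC. Qed.

(* Injectivity of f forces gcd(n, m) = 1: an element t of order gcd(n, m)
   satisfies f(t) = h(1) = f(1). *)
Lemma coprime_of_inj : injective f -> coprime n m.
Proof.
move=> f_inj; have [w prim_w] := finField_prim_root.
have k_dvd_q1 : (gcdn n m %| #|F| - 1)%N by rewrite -m_d dvdn_mulr ?dvdn_gcdr.
have prim_t := dvdn_prim_root prim_w k_dvd_q1; set t := w ^+ _ in prim_t.
have tn : t ^+ n = 1 by apply/eqP; rewrite -(prim_order_dvd prim_t) dvdn_gcdl.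
have tm : t ^+ m = 1 by apply/eqP; rewrite -(prim_order_dvd prim_t) dvdn_gcdr.
have t1 : t = 1 by apply: f_inj; rewrite /f tn tm !expr1n.
by have := prim_order_dvd prim_t 1; rewrite expr1 t1 eqxx dvdn1.
Qed.

(* Injectivity of f forces h to have no zero on mu_d: a zero h(x^m) = 0
   with x != 0 would give f(x) = 0 = f(0). *)
Lemma nonzero_of_inj : injective f -> {in d.-unity_root, forall z, h z != 0}.
Proof.
move=> f_inj z /expm_onto[x x0 <-]; apply: contraNneq x0 => hx0.
by apply/eqP/f_inj; rewrite f0 /f hx0 mulr0.
Qed.

(* Surjectivity of f makes g map mu_d onto itself, hence injectively. *)
Lemma roots_inj_of_bij : bijective f -> {in d.-unity_root &, injective g}.
Proof.
case=> finv _ finvK; set R := [set z : F | d.-unity_root z].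
have R_sub_gR : R \subset g @: R.
  apply/subsetP => z; rewrite inE => /expm_onto[y y0 <-].
  have x0 : finv y != 0 by apply: contraNneq y0 => x0; rewrite -(finvK y) x0 f0.
  by apply/imsetP; exists (finv y ^+ m); rewrite ?inE ?expm_unity // -f_expm finvK.
have /imset_injP g_inj : #|g @: R| == #|R|.
  by rewrite eqn_leq leq_imset_card (subset_leq_card R_sub_gR).
by move=> z1 z2 z1R z2R; apply: g_inj; rewrite inE.
Qed.

Lemma bij_of_conditions : coprime n m -> {in d.-unity_root, forall z, h z != 0} ->
  {in d.-unity_root &, injective g} -> bijective f.
Proof.
move=> co_nm h_nz g_inj.
have f_eq0 x : (f x == 0) = (x == 0).
  have [-> | x0] := eqVneq x 0; first by rewrite f0 eqxx.
  by apply: negbTE; rewrite /f mulf_neq0 ?expf_neq0 ?(h_nz _ (expm_unity x0)).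
apply: injF_bij => x y fxy.
have [y0 | y0] := eqVneq y 0; first by apply/eqP; rewrite y0 -f_eq0 fxy y0 f0.
have x0 : x != 0 by rewrite -f_eq0 fxy f_eq0.
have xm_ym : x ^+ m = y ^+ m.
  by apply: (g_inj _ _ (expm_unity x0) (expm_unity y0)); rewrite -!f_expm fxy.
have xn_yn : x ^+ n = y ^+ n.
  by apply: (mulIf (h_nz _ (expm_unity y0))); move: fxy; rewrite /f xm_ym.
have xy1 : x / y = 1.
  apply: (unity_coprime n_gt0 co_nm);
  by rewrite expr_div_n ?xn_yn ?xm_ym divff ?expf_neq0.
by rewrite -(divfK y0 x) xy1 mul1r.
Qed.

Theorem perm_criterion : bijective f <->
  [/\ coprime n m, {in d.-unity_root, forall z, h z != 0} &
      {in d.-unity_root &, injective g}].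
Proof.
split=> [f_bij | [co_nm h_nz g_inj]]; last exact: bij_of_conditions.
have f_inj := bij_inj f_bij.
by split; [exact: coprime_of_inj | exact: nonzero_of_inj | exact: roots_inj_of_bij].
Qed.

End Criterion.

End PowerMap.

End FiniteFieldUnits.

Section CubeRoots.

Variables (R : fieldType) (xi : R).
Hypotheses (xi3 : xi ^+ 3 = 1) (xi_neq1 : xi != 1).

Lemma prim_cube_root : 3.-primitive_root xi.
Proof.
have [k prim_k] := prim_order_exists (isT : (0 < 3)%N) xi3.
case: k prim_k => [|[|[|[|k]]]] // prim_1 _.
by move: xi_neq1; rewrite -[xi]expr1 (prim_expr_order prim_1) eqxx.
Qed.

Lemma cube_root_neq0 : xi != 0.
Proof. by apply: contra_neq xi_neq1 => xi0; rewrite -xi3 xi0 expr0n. Qed.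

Lemma cube_root_unity (i : nat) : 3.-unity_root (xi ^+ i).
Proof. by apply/unity_rootP; rewrite exprAC xi3 expr1n. Qed.

Lemma cube_rootP (z : R) : 3.-unity_root z -> [\/ z = 1, z = xi | z = xi ^+ 2].
Proof.
move=> /unity_rootP/(prim_rootP prim_cube_root)[[[|[|[|]]]] //= _ ->].
- by constructor 1.
- by constructor 2; rewrite expr1.
- by constructor 3.
Qed.

Lemma cube_roots_allP (P : pred R) :
  reflect {in 3.-unity_root, forall z, P z} [&& P 1, P xi & P (xi ^+ 2)].
Proof.
apply: (iffP and3P) => [[P1 Pxi Pxi2] z /cube_rootP[] -> // | P_roots].
by split; apply: P_roots;
  [exact: (cube_root_unity 0) | exact: (cube_root_unity 1) | exact: cube_root_unity].
Qed.

(* A map is injective on mu_3 iff its values at 1, xi, xi^2 are distinct;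
   the pairs are listed as consecutive powers (xi^(i+1), xi^i), i = 0, 2, 1. *)
Lemma cube_roots_inj (T : eqType) (g : R -> T) :
  {in 3.-unity_root &, injective g} <->
  [/\ g xi != g 1, g 1 != g (xi ^+ 2) & g (xi ^+ 2) != g xi].
Proof.
split=> [g_inj | [g10 g02 g21] z1 z2 /cube_rootP z1_root /cube_rootP z2_root].
  have g_neq i j : (i %% 3 != j %% 3)%N -> g (xi ^+ i) != g (xi ^+ j).
    apply: contra_neq => /(g_inj _ _ (cube_root_unity i) (cube_root_unity j)) /eqP.
    by rewrite (eq_prim_root_expr prim_cube_root) => /eqP.
  by split; [exact: (g_neq 1 0) | exact: (g_neq 0 2) | exact: (g_neq 2 1)].
by case: z1_root => ->; case: z2_root => -> // g_eq;
  move: g10 g02 g21; rewrite g_eq eqxx.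
Qed.

Lemma cube_roots_add_neq0 (a : R) :
  {in 3.-unity_root, forall z, z + a != 0} <-> a \notin [:: -1; - xi; - xi ^+ 2].
Proof.
rewrite !inE !negb_or -!addr_eq0 ![a + _]addrC.
exact: rwP (cube_roots_allP (fun z => z + a != 0)).
Qed.

End CubeRoots.

Section CubicCharacter.

Variables (F : finFieldType) (xi : F) (delta : algC).
Hypothesis (q_mod3 : (#|F| %% 3 = 1)%N).

Local Notation m := ((#|F| - 1) %/ 3)%N.

Lemma m_mul3 : (m * 3)%N = (#|F| - 1)%N.
Proof. by lia. Qed.

Hypotheses (xi3 : xi ^+ 3 = 1) (xi_neq1 : xi != 1).
Hypotheses (delta3 : delta ^+ 3 = 1) (delta_neq1 : delta != 1).
Local Notation eta := (cubic_char xi delta).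

Lemma cubic_char_eq (c : F) (k : nat) : c != 0 ->
  (eta c == delta ^+ k) = (c ^+ m == xi ^+ k).
Proof.
move=> c0; rewrite /cubic_char (negbTE c0).
have prim_xi := prim_cube_root xi3 xi_neq1.
have prim_delta := prim_cube_root delta3 delta_neq1.
case: pickP => [j /eqP cj | no_j].
  by rewrite cj (eq_prim_root_expr prim_delta) (eq_prim_root_expr prim_xi).
have /unity_rootP/(prim_rootP prim_xi)[j cj] := expm_unity m_mul3 c0.
by move: (no_j j); rewrite /= cj eqxx.
Qed.

Lemma cubic_char_ratio (u v : F) (n : nat) : u != 0 -> v != 0 ->
  (eta (u / v) == delta ^+ (2 * n)) = (xi ^+ n * u ^+ m == v ^+ m).
Proof.
move=> u0 v0; rewrite cubic_char_eq ?mulf_neq0 ?invr_eq0 // expr_div_n.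
have vm0 : v ^+ m != 0 by rewrite expf_neq0.
have xin3 : (xi ^+ n) ^+ 3 = 1 by rewrite exprAC xi3 expr1n.
have xin0 : xi ^+ n != 0 by rewrite expf_neq0 // cube_root_neq0.
rewrite -(inj_eq (mulIf vm0)) divfK // (mulnC 2) exprM.
by rewrite -(inj_eq (mulfI xin0)) mulrA -exprS xin3 mul1r.
Qed.

Lemma cubic_char_step (n : nat) (a : F) (i : nat) :
  xi ^+ i + a != 0 -> xi ^+ i.+1 + a != 0 ->
  (eta ((xi ^+ i.+1 + a) / (xi ^+ i + a)) == delta ^+ (2 * n)) =
  ((xi ^+ i.+1) ^+ n * (xi ^+ i.+1 + a) ^+ m == (xi ^+ i) ^+ n * (xi ^+ i + a) ^+ m).
Proof.
move=> v0 u0; rewrite cubic_char_ratio //.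
have -> : (xi ^+ i.+1) ^+ n = (xi ^+ i) ^+ n * xi ^+ n by rewrite exprSr exprMn.
by rewrite -mulrA (inj_eq (mulfI _)) // !expf_neq0 // cube_root_neq0.
Qed.

Lemma cubic_char_conditions (n : nat) (a : F) :
  {in 3.-unity_root, forall z, z + a != 0} ->
  {in 3.-unity_root &, injective (fun z => z ^+ n * (z + a) ^+ m)} <->
  [/\ eta ((xi + a) / (1 + a)) != delta ^+ (2 * n),
      eta ((1 + a) / (xi ^+ 2 + a)) != delta ^+ (2 * n) &
      eta ((xi ^+ 2 + a) / (xi + a)) != delta ^+ (2 * n)].
Proof.
move=> /(cube_roots_allP xi3 xi_neq1)/and3P[nz1 nz_xi nz_xi2].
pose G z := z ^+ n * (z + a) ^+ m.
have c1 : (eta ((xi + a) / (1 + a)) == delta ^+ (2 * n)) = (G xi == G 1).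
  exact: (cubic_char_step n (i := 0) nz1 nz_xi).
have c2 : (eta ((1 + a) / (xi ^+ 2 + a)) == delta ^+ (2 * n)) = (G 1 == G (xi ^+ 2)).
  by have := cubic_char_step n (i := 2) nz_xi2; rewrite xi3 => /(_ nz1) ->.
have c3 : (eta ((xi ^+ 2 + a) / (xi + a)) == delta ^+ (2 * n)) = (G (xi ^+ 2) == G xi).
  exact: (cubic_char_step n (i := 1) nz_xi nz_xi2).
by rewrite c1 c2 c3; exact: cube_roots_inj.
Qed.

End CubicCharacter.

Theorem lemma4p1 (F : finFieldType) (xi : F) (delta : algC)
  (hq : (#|F| %% 3 = 1)%N)
  (hxi3 : xi ^+ 3 = 1) (hxi1 : xi != 1)
  (hdelta3 : delta ^+ 3 = 1) (hdelta1 : delta != 1)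
  (n : nat) (hn : (0 < n)%N) (a : F) :
  perm_poly ('X^n * ('X^((#|F| - 1) %/ 3) + a%:P)) <->
  [/\ coprime n ((#|F| - 1) %/ 3),
      a \notin [:: -1; - xi; - xi ^+ 2],
      cubic_char xi delta ((xi + a) / (1 + a)) != delta ^+ (2 * n),
      cubic_char xi delta ((1 + a) / (xi ^+ 2 + a)) != delta ^+ (2 * n) &
      cubic_char xi delta ((xi ^+ 2 + a) / (xi + a)) != delta ^+ (2 * n)].
Proof.
set m := ((#|F| - 1) %/ 3)%N.
have poly_map : perm_poly ('X^n * ('X^m + a%:P)) <->
    bijective (fun x : F => x ^+ n * (x ^+ m + a)).
  by split=> /eq_bij; apply=> x; rewrite !hornerE.
have crit := perm_criterion (m_mul3 hq) (fun z => z + a) hn.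
have nz_iff := cube_roots_add_neq0 hxi3 hxi1 a.
have inj_iff := cubic_char_conditions hq hxi3 hxi1 hdelta3 hdelta1 n (a := a).
apply: iff_trans poly_map _; apply: iff_trans crit _.
split=> [[co_nm nz G_inj] | [co_nm a_notin c1 c2 c3]].
  by have [c1 c2 c3] := (inj_iff nz).1 G_inj; split=> //; apply/nz_iff.
by have nz := nz_iff.2 a_notin; split=> //; apply/(inj_iff nz).
Qed.
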